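(* Let $R$ be an associative ring with identity and $a,b,c,d\in R$ such that $a$ has a $(b,c)$-inverse $a^{\|(b,c)}$. Let $b^{-}$ be any (fixed) inner inverse of $b$ and put $e=bb^{-}$. Then the following are equivalent: (i) $d$ has a $(b,c)$-inverse; (ii) $e\in ea^{\|(b,c)}deR\cap Rea^{\|(b,c)}de$; (iii) $a^{\|(b,c)}de+1-e$ is invertible in $R$. In this case $d^{\|(b,c)}=(a^{\|(b,c)}de+1-e)^{-1}a^{\|(b,c)}$.
   Context: For $a,b,c\in R$, $a$ is $(b,c)$-invertible if there exists $y\in R$ with $y\in (bRy)\cap(yRc)$, $yab=b$ and $cay=c$; such $y$ is unique and denoted $a^{\|(b,c)}$. An inner inverse of $b$ is an element $b^{-}$ with $bb^{-}b=b$ (it exists here since $b$ is regular whenever a $(b,c)$-inverse exists). *)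

From HB Require Import structures.
From mathcomp Require Import all_boot all_order all_algebra.
Set Implicit Arguments. Unset Strict Implicit. Unset Printing Implicit Defensive.
Import GRing.Theory.
Local Open Scope ring_scope.

Definition is_bc_inverse (R : pzRingType) (a b c y : R) : Prop :=
  (exists r : R, y = b * r * y) /\ (exists s : R, y = y * s * c) /\
  y * a * b = b /\ c * a * y = c.

Definition bc_invertible (R : pzRingType) (a b c : R) : Prop :=
  exists y : R, is_bc_inverse a b c y.

Definition invertible (R : pzRingType) (x : R) : Prop :=
  exists w : R, w * x = 1 /\ x * w = 1.

From HB Require Import structures.
From mathcomp Require Import all_boot all_order all_algebra.
Set Implicit Arguments. Unset Strict Implicit. Unset Printing Implicit Defensive.
Import GRing.Theory.
Local Open Scope ring_scope.

(* With e = b b^- idempotent, left multiplication by e fixes bR, so p = y d e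
   lies in the corner ring eRe.  As eRe and (1 - e)R(1 - e) do not interact,
   p + 1 - e is a unit of R iff p is a unit of eRe, i.e. iff e lies in
   pR \cap Rp.  If z = d^||(b,c) exists, z a e inverts p in eRe; conversely,
   if w inverts p + 1 - e then w y satisfies the defining equations of
   d^||(b,c), which is unique. *)

Section CornerShift.

Variables (R : pzRingType) (e : R).
Hypothesis ee : e * e = e.

Lemma mulr_corner_shift (p q : R) : p * e = p -> e * q = q ->
  (p + 1 - e) * (q + 1 - e) = p * q + (1 - e).
Proof.
move=> pe eq.
have p1e : p * (1 - e) = 0 by rewrite mulrBr mulr1 pe subrr.
have e1q : (1 - e) * q = 0 by rewrite mulrBl mul1r eq subrr.
have e1e : (1 - e) * (1 - e) = 1 - e.
  by rewrite mulrBr mulr1 mulrBl mul1r ee subrr subr0.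
rewrite -!addrA mulrDl (mulrDr p q (1 - e)) (mulrDr (1 - e) q (1 - e)).
by rewrite p1e e1q e1e addr0 add0r.
Qed.

Lemma corner_shiftKr (p : R) : p * e = p -> (p + 1 - e) * e = p.
Proof. by move=> pe; rewrite mulrBl mulrDl mul1r ee pe addrK. Qed.

Lemma corner_shiftKl (p : R) : e * p = p -> e * (p + 1 - e) = p.
Proof. by move=> ep; rewrite mulrBr mulrDr mulr1 ee ep addrK. Qed.

Lemma corner_shift_inverse (p q : R) :
  e * p = p -> p * e = p -> e * q = q -> q * e = q -> q * p = e -> p * q = e ->
  (q + 1 - e) * (p + 1 - e) = 1 /\ (p + 1 - e) * (q + 1 - e) = 1.
Proof.
move=> ep pe eq qe qp pq.
by rewrite !mulr_corner_shift // qp pq addrC subrK.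
Qed.

Lemma corner_shift_invertible (p : R) : e * p = p -> p * e = p ->
  invertible (p + 1 - e) <-> exists u v : R, e = p * u /\ e = v * p.
Proof.
move=> ep pe; split.
  move=> [w [wx xw]]; exists w, w; split.
    by rewrite -{1}(corner_shiftKl ep) -mulrA xw mulr1.
  by rewrite -{1}(corner_shiftKr pe) mulrA wx mul1r.
move=> [u [v [pu vp]]].
set q := e * u * e.
have eq : e * q = q by rewrite /q !mulrA ee.
have qe : q * e = q by rewrite /q -mulrA ee.
have pq : p * q = e by rewrite /q !mulrA pe -pu ee.
(* Left and right inverses of p in eRe coincide: q = (v p) q = v e. *)
have qv : q = v * e by rewrite -[LHS]eq {1}vp -mulrA pq.
have qp : q * p = e by rewrite qv -mulrA ep -vp.
by exists (q + 1 - e); apply: corner_shift_inverse.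
Qed.

End CornerShift.

Lemma inverse_commute (R : pzRingType) (w x e : R) :
  w * x = 1 -> x * w = 1 -> x * e = e * x -> w * e = e * w.
Proof.
move=> wx xw xe.
by rewrite -[w * e]mulr1 -xw !mulrA -(mulrA w e x) -xe mulrA wx mul1r.
Qed.

Section BCInverse.

Variables (R : pzRingType) (b c : R).

Lemma absorb_bR (d w z : R) :
  (exists r : R, z = b * r * z) -> w * d * b = b -> w * d * z = z.
Proof. by move=> [r zr] wdb; rewrite {1}zr !mulrA wdb -zr. Qed.

Lemma absorb_Rc (d y z : R) :
  (exists s : R, y = y * s * c) -> c * d * z = c -> y * d * z = y.
Proof.
move=> [s ys] cdz.
rewrite {1}ys.
have -> : y * s * c * d * z = y * s * (c * d * z) by rewrite !mulrA.
by rewrite cdz -ys.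
Qed.

Lemma bc_inverse_unique (d z1 z2 : R) :
  is_bc_inverse d b c z1 -> is_bc_inverse d b c z2 -> z1 = z2.
Proof.
move=> [bz1 [_ [_ cdz1]]] [_ [z2c [z2db _]]].
by rewrite -(absorb_bR bz1 z2db) (absorb_Rc z2c cdz1).
Qed.

Variables (a y bm : R).
Hypotheses (Hy : is_bc_inverse a b c y) (Hbm : b * bm * b = b).
Local Notation e := (b * bm).

Lemma inner_idem : e * e = e.
Proof. by rewrite mulrA Hbm. Qed.

Lemma inner_idem_absorb (z : R) : (exists r : R, z = b * r * z) -> e * z = z.
Proof. by move=> bz; apply: absorb_bR. Qed.

Lemma bc_inverse_of_corner_unit (d w : R) :
  w * (y * d * e + 1 - e) = 1 -> (y * d * e + 1 - e) * w = 1 ->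
  is_bc_inverse d b c (w * y).
Proof.
have [by_ [[s ys] [_ cay]]] := Hy.
set x := y * d * e + 1 - e => wx xw.
have ey : e * y = y := inner_idem_absorb by_.
have ee := inner_idem.
have xe : x * e = y * d * e by apply: corner_shiftKr; rewrite // -mulrA ee.
have ex : e * x = y * d * e by apply: corner_shiftKl; rewrite // !mulrA ey.
have ewy : e * (w * y) = w * y.
  by rewrite mulrA -(inverse_commute wx xw) ?xe ?ex // -mulrA ey.
have ydwy : y * d * (w * y) = y.
  have : x * (w * y) = y by rewrite mulrA xw mul1r.
  by rewrite /x mulrBl mulrDl mul1r ewy addrK -(mulrA _ e) ewy.
split; first by exists bm; rewrite ewy.
split; first by exists s; rewrite -!mulrA (mulrA y s c) -ys.
split; last by rewrite -[RHS]cay -[in RHS]ydwy !mulrA cay.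
have eb : e * b = b by rewrite Hbm.
by rewrite -{1}eb -(mulrA w y) -mulrA (mulrA _ e) -xe !mulrA wx mul1r eb.
Qed.

Lemma corner_unit_of_bc_inverse (d z : R) : is_bc_inverse d b c z ->
  (z * a * e + 1 - e) * (y * d * e + 1 - e) = 1 /\
  (y * d * e + 1 - e) * (z * a * e + 1 - e) = 1.
Proof.
move=> Hz; have [bz [zc [zdb cdz]]] := Hz.
have [by_ [yc [yab cay]]] := Hy.
have ee := inner_idem.
have ey : e * y = y := inner_idem_absorb by_.
have ez : e * z = z := inner_idem_absorb bz.
have zay : z * a * y = z := absorb_Rc zc cay.
have ydz : y * d * z = y := absorb_Rc yc cdz.
apply: corner_shift_inverse => //.
- by rewrite !mulrA ey.
- by rewrite -mulrA ee.
- by rewrite !mulrA ez.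
- by rewrite -mulrA ee.
- have -> : z * a * e * (y * d * e) = z * a * (e * y) * d * e by rewrite !mulrA.
  by rewrite ey zay mulrA zdb.
- have -> : y * d * e * (z * a * e) = y * d * (e * z) * a * e by rewrite !mulrA.
  by rewrite ez ydz mulrA yab.
Qed.

Lemma bc_invertible_iff_corner_unit (d : R) :
  bc_invertible d b c <-> invertible (y * d * e + 1 - e).
Proof.
split=> [[z Hz] | [w [wx xw]]].
  by exists (z * a * e + 1 - e); apply: corner_unit_of_bc_inverse.
by exists (w * y); apply: bc_inverse_of_corner_unit.
Qed.

End BCInverse.

Theorem theorem3p13 (R : pzRingType) (a b c d y bm : R) :
  is_bc_inverse a b c y -> b * bm * b = b ->
  let e := b * bm in
  (bc_invertible d b c <->
     exists u v : R, e = e * y * d * e * u /\ e = v * e * y * d * e) /\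
  (bc_invertible d b c <-> invertible (y * d * e + 1 - e)) /\
  (forall z w : R, is_bc_inverse d b c z ->
     w * (y * d * e + 1 - e) = 1 -> (y * d * e + 1 - e) * w = 1 ->
     z = w * y).
Proof.
move=> Hy Hbm e.
have ee : e * e = e := inner_idem Hbm.
have ey : e * y = y := inner_idem_absorb Hbm Hy.1.
have unit_iff := bc_invertible_iff_corner_unit Hy Hbm d.
have ep : e * (y * d * e) = y * d * e by rewrite !mulrA ey.
have pe : y * d * e * e = y * d * e by rewrite -mulrA ee.
split; last split=> // z w Hz wx xw.
- apply: iff_trans unit_iff _; apply: iff_trans (corner_shift_invertible ee ep pe) _.
  have Eu u : e * y * d * e * u = y * d * e * u by rewrite ey.
  have Ev v : v * e * y * d * e = v * (y * d * e) by rewrite -(mulrA v) ey !mulrA.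
  by split=> -[u [v uv]]; exists u, v; rewrite Eu Ev in uv *.
- exact: bc_inverse_unique Hz (bc_inverse_of_corner_unit Hy Hbm wx xw).
Qed.
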